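(* Let $G$ be a topological group. Let $f\in L^0(G)$ and let $U$ be a neighbourhood of the identity in $L^0(G)$. Then there exist a finite subset $E\subseteq G$ and $m\in\mathbb N$ such that for every $n\in\mathbb N$ with $n\ge m$ one has $f\in U\,h_n(E^n)$.
   Context: Let $\lambda$ be Lebesgue measure on $[0,1]$. A map $f\colon [0,1]\to G$ is strongly $\lambda$-measurable if for every $\epsilon>0$ there is a closed $A\subseteq[0,1]$ with $\lambda([0,1]\setminus A)\le\epsilon$ and $f|_A$ continuous. $L^{0}(G)$ is the set of $\lambda$-a.e. equivalence classes of strongly $\lambda$-measurable maps $[0,1]\to G$, with pointwise group operations and the topology of convergence in measure: a neighbourhood basis of the identity consists of the sets $N(U,\epsilon)=\{f : \lambda(\{x: f(x)\notin U\})<\epsilon\}$, $U$ an open identity neighbourhood in $G$, $\epsilon>0$. For $n\ge1$, $h_n\colon G^n\to L^0(G)$ sends $g=(g_1,\dots,g_n)$ to the map which is constantly $g_i$ on $[(i-1)/n,i/n)$ for $i=1,\dots,n$. *)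

From HB Require Import structures.
From mathcomp Require Import all_boot all_order all_algebra.
From mathcomp Require Import all_classical all_reals all_analysis.
Set Implicit Arguments. Unset Strict Implicit. Unset Printing Implicit Defensive.
Import Order.TTheory GRing.Theory Num.Theory numFieldNormedType.Exports.
Local Open Scope classical_set_scope.
Local Open Scope ring_scope.
Local Open Scope ereal_scope.

Definition topological_group (G : topologicalType)
    (mul : G -> G -> G) (inv : G -> G) (one : G) : Prop :=
  [/\ (forall x y z, mul x (mul y z) = mul (mul x y) z),
      (forall x, mul one x = x /\ mul x one = x),
      (forall x, mul (inv x) x = one /\ mul x (inv x) = one),
      continuous (fun p : G * G => mul p.1 p.2)
    & continuous inv].

(* Lebesgue measure on [0,1]: maps [0,1] -> G are represented by maps R -> G
   whose values outside [0,1] are irrelevant. *)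

Definition strongly_measurable (R : realType) (G : topologicalType)
    (f : R -> G) : Prop :=
  forall eps : R, (0 < eps)%R ->
    exists A : set R, [/\ closed A, A `<=` `[0%R, 1%R]%classic,
      lebesgue_measure (`[0%R, 1%R]%classic `\` A) <= eps%:E
      & {within A, continuous f}].

Definition ae_eq01 (R : realType) (G : topologicalType) (f g : R -> G) : Prop :=
  (@lebesgue_measure R).-negligible ([set x | f x <> g x] `&` `[0%R, 1%R]%classic).

Definition N0 (R : realType) (G : topologicalType) (V : set G) (eps : R) :
    set (R -> G) :=
  [set f | strongly_measurable f /\
     lebesgue_measure (`[0%R, 1%R]%classic `&` [set x | ~ V (f x)]) < eps%:E].

(* A set of representatives describing a subset of L^0(G): it consists of
   strongly measurable maps and is closed under a.e. equality. *)
Definition L0_set (R : realType) (G : topologicalType) (U : set (R -> G)) : Prop :=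
  (forall u, U u -> strongly_measurable u) /\
  (forall u v, U u -> strongly_measurable v -> ae_eq01 u v -> U v).

Definition L0_nbhs1 (R : realType) (G : topologicalType) (one : G)
    (U : set (R -> G)) : Prop :=
  L0_set U /\
  exists (V : set G) (eps : R), [/\ open V, V one, (0 < eps)%R & N0 V eps `<=` U].

(* h_n : G^n -> L^0(G): constantly g_i on [(i-1)/n, i/n) (1-indexed);
   here 0-indexed: the k-th entry (k < n) on [k/n, (k+1)/n).
   The value at x = 1 (a null set) is taken to be the last entry. *)
Definition hn (R : realType) (G : topologicalType) (one : G) (n : nat)
    (g : n.-tuple G) (x : R) : G :=
  nth one g (minn (Num.truncn (n%:R * x)%R) n.-1).

From HB Require Import structures.
From mathcomp Require Import all_boot all_order all_algebra.
From mathcomp Require Import all_classical all_reals all_analysis.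
From mathcomp Require Import finmap ring lra zify measurable_realfun.
Import Order.TTheory GRing.Theory Num.Theory numFieldNormedType.Exports.
Local Open Scope classical_set_scope.
Local Open Scope ring_scope.

(* U contains some N(V, eps).  Strong measurability gives a closed, hence compact,
   A in [0,1] missing at most eps/2 of [0,1] on which f is continuous.  Continuity
   of y |-> f(y) f(x)^-1 at the points of A and compactness yield a finite set E and
   a Lebesgue number d > 0 such that each y in A has some e in E with f(x) e^-1 in V
   for all x in A closer than d to y.  Once 1/n < d, the cells of h_n are shorter
   than d, so choosing such an e for every cell that meets A (and 1 for the others)
   gives g in (E u {1})^n with f h_n(g)^-1 in V on A.  Hence u := f h_n(g)^-1 lies in
   N(V, eps), which is inside U, and f = u h_n(g). *)

Set Implicit Arguments.
Unset Strict Implicit.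
Unset Printing Implicit Defensive.

Section StepIndex.
Variable R : realType.

Definition step_index (n : nat) (x : R) : nat :=
  minn (Num.truncn (n%:R * x)) n.-1.

Lemma hnE (G : topologicalType) (one : G) n (g : n.-tuple G) x :
  hn one g x = nth one g (step_index n x).
Proof. by []. Qed.

Lemma step_index_lt n x : (0 < n)%N -> (step_index n x < n)%N.
Proof. by rewrite /step_index; lia. Qed.

Lemma clamped_truncn_jump (n : nat) (c c' : R) : 0 <= c -> c <= c' ->
    minn (Num.truncn c) n.-1 != minn (Num.truncn c') n.-1 ->
  exists k : nat, (0 < k < n)%N /\ c < k%:R <= c'.
Proof.
move=> c0 cc' ne; have tt' := le_truncn cc'.
have [tn tt'_lt] : (Num.truncn c < n.-1)%N /\ (Num.truncn c < Num.truncn c')%N.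
  by move: ne; rewrite neq_ltn; lia.
exists (Num.truncn c).+1; split; first by lia.
rewrite truncnS_gt /=; apply: le_trans (_ : (Num.truncn c')%:R <= c').
  by rewrite ler_nat.
by rewrite truncn_le (le_trans c0).
Qed.

Lemma clamped_truncn_eq (n : nat) (a b eta : R) : 0 <= a -> 0 <= b ->
    `|a - b| < eta -> (forall k : nat, (0 < k < n)%N -> eta <= `|a - k%:R|) ->
  minn (Num.truncn a) n.-1 = minn (Num.truncn b) n.-1.
Proof.
move=> a0 b0 ab_eta far; apply/eqP; apply: contraT => ne.
have [k kn k_between] : exists2 k : nat, (0 < k < n)%N &
    (a < k%:R <= b) || (b < k%:R <= a).
  have [ab|ba] := leP a b.
    by have [k [? kab]] := clamped_truncn_jump a0 ab ne; exists k; rewrite ?kab.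
  rewrite eq_sym in ne.
  by have [k [? kba]] := clamped_truncn_jump b0 (ltW ba) ne; exists k; rewrite ?kba ?orbT.
move: (far k kn) ab_eta k_between; rewrite ler_normr ltr_norml.
by case/orP => ? /andP[? ?] /orP[] /andP[? ?]; lra.
Qed.

Lemma step_index_bounds n x : (0 < n)%N -> 0 <= x <= 1 ->
  (step_index n x)%:R <= n%:R * x <= (step_index n x).+1%:R.
Proof.
move=> n0 /andP[x0 x1]; have nx0 : 0 <= n%:R * x by rewrite mulr_ge0.
have /andP[lo hi] := truncn_itv nx0.
rewrite /step_index; case: (leqP (Num.truncn (n%:R * x)) n.-1) => tn.
  by rewrite lo ltW.
rewrite prednK // ler_piMr //= andbT; apply: le_trans lo; rewrite ler_nat; lia.
Qed.

Lemma step_index_dist n x y : (0 < n)%N -> 0 <= x <= 1 -> 0 <= y <= 1 ->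
  step_index n x = step_index n y -> `|x - y| <= n%:R^-1.
Proof.
move=> n0 x01 y01 same; have n0R : 0 < n%:R :> R by rewrite ltr0n.
have /andP[xlo xhi] := step_index_bounds n0 x01.
have /andP[ylo yhi] := step_index_bounds n0 y01.
rewrite -(ler_pM2l n0R) mulfV ?gt_eqF //.
have -> : n%:R * `|x - y| = `|n%:R * x - n%:R * y| by rewrite -mulrBr normrM gtr0_norm.
move: xlo xhi; rewrite same -natr1 in yhi * => xlo xhi.
rewrite ler_norml; apply/andP; split; lra.
Qed.

Lemma step_index_locally_const n x y r : (0 < n)%N -> 0 <= x -> 0 <= y ->
    `|x - y| < r -> (forall k : nat, (0 < k < n)%N -> r <= `|x - k%:R / n%:R|) ->
  step_index n x = step_index n y.
Proof.
move=> n0 x0 y0 xy far; have n0R : 0 < n%:R :> R by rewrite ltr0n.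
apply: (@clamped_truncn_eq _ _ _ (n%:R * r)); rewrite ?mulr_ge0 //.
  by rewrite -mulrBr normrM gtr0_norm // ltr_pM2l.
move=> k kn; have -> : n%:R * x - k%:R = n%:R * (x - k%:R / n%:R).
  by rewrite mulrBr mulrCA mulfV ?gt_eqF // mulr1.
by rewrite normrM gtr0_norm // ler_pM2l // far.
Qed.

End StepIndex.

Section StronglyMeasurable.
Variable R : realType.
Implicit Types G H : topologicalType.

Lemma strongly_measurable_pair G H (f : R -> G) (h : R -> H) :
  strongly_measurable f -> strongly_measurable h ->
  strongly_measurable (fun x => (f x, h x)).
Proof.
move=> sf sh e e0; have e20 : 0 < e / 2 by rewrite divr_gt0.
have [A [cA A01 mA fA]] := sf _ e20; have [B [cB B01 mB hB]] := sh _ e20.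
exists (A `&` B); split; first exact: closedI.
- by move=> x [/A01].
- rewrite setDIr; apply: le_trans (measureU2 _ _ _) _.
  + by apply: measurableD => //; exact: closed_measurable.
  + by apply: measurableD => //; exact: closed_measurable.
  by rewrite [e in e%:E]splitr EFinD leeD.
- move=> x; apply: cvg_pair.
  + exact: (continuous_subspaceW (@subIsetl _ A B) fA).
  + exact: (continuous_subspaceW (@subIsetr _ A B) hB).
Qed.

Lemma strongly_measurable_comp G H (phi : G -> H) (f : R -> G) :
  continuous phi -> strongly_measurable f -> strongly_measurable (phi \o f).
Proof.
move=> cphi sf e e0; have [A [cA A01 mA fA]] := sf e e0.
exists A; split => // x.
by apply: (@continuous_comp (subspace A)); [exact: fA | exact: cphi].
Qed.

Lemma strongly_measurable_hn G (one : G) n (g : n.-tuple G) : (0 < n)%N ->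
  strongly_measurable (hn one g : R -> G).
Proof.
move=> n0 e e0; have n0R : 0 < n%:R :> R by rewrite ltr0n.
pose r := e / 2 / n%:R; have r0 : 0 < r by rewrite !divr_gt0.
(* Off small balls around the jump points k / n, h_n is locally constant. *)
pose S := \bigcup_(k < n) ball (k%:R / n%:R : R) r.
have oS : open S by apply: bigcup_open => k _; exact: ball_open.
exists (`[0%R, 1%R] `\` S); split => //.
- by apply: closedI; [exact: itv_closed | exact: open_closedC].
- rewrite setDD; apply: le_trans (content_subadditive lebesgue_measure
    (F := fun k => ball (k%:R / n%:R : R) r) (n := n) _ _ _) _.
  + by move=> k _; apply: open_measurable; exact: ball_open.
  + by apply: measurableI => //; exact: open_measurable.
  + by move=> x [_]; rewrite -(bigcup_mkord n (fun k => ball (k%:R / n%:R : R) r)).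
  rewrite (eq_bigr (fun=> (r *+ 2)%:E)); last first.
    by move=> k _; exact: lebesgue_measure_ball (ltW r0).
  rewrite sumEFin sumr_const card_ord lee_fin.
  suff -> : r *+ 2 *+ n = e by [].
  by rewrite -mulrnA -mulr_natr natrM /r; field; rewrite gt_eqF.
- apply/subspace_continuousP => x [x01 Sx]; apply: cvg_near_cst.
  apply/nbhs_ballP; exists r => // y xy [y01 _].
  move: x01 y01; rewrite /= !in_itv /= => /andP[x0 _] /andP[y0 _].
  rewrite /from_subspace !hnE; congr (nth _ _ _); symmetry.
  apply: (step_index_locally_const n0 x0 y0 xy).
  move=> k /andP[_ kn]; rewrite leNgt distrC; apply/negP => xk.
  by apply: Sx; exists k.
Qed.

End StronglyMeasurable.

Lemma ae_eq01_refl (R : realType) (G : topologicalType) (f : R -> G) :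
  ae_eq01 f f.
Proof. by apply: negligibleS (negligible_set0 _) => x []. Qed.

Lemma exists_step_tuple (R : realType) (G : topologicalType)
    (P : R -> G -> Prop) (A : set R) (E : set G) (e0 : G) (d : R) n :
    (0 < n)%N -> n%:R^-1 < d -> A `<=` `[0%R, 1%R] ->
    (forall y, A y -> exists2 e, E e & forall x, A x -> `|x - y| < d -> P x e) ->
  exists g : n.-tuple G,
    (forall i, (E `|` [set e0]) (tnth g i)) /\ forall x, A x -> P x (hn e0 g x).
Proof.
move=> n0 nd A01 net.
have in01 x : A x -> 0 <= x <= 1 by move/A01; rewrite /= in_itv.
have pick k : exists e, (E `|` [set e0]) e /\
    forall x, A x -> step_index n x = k -> P x e.
  have [[y Ay <-]|none] := pselect (exists2 y, A y & step_index n y = k).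
    have [e Ee He] := net y Ay; exists e; split; first by left.
    move=> x Ax same; apply: He => //; apply: le_lt_trans nd.
    exact: step_index_dist n0 (in01 _ Ax) (in01 _ Ay) same.
  by exists e0; split => [|x Ax xk]; [right | case: none; exists x].
have [gf gfP] := choice pick.
exists [tuple gf i | i < n]; split => [i|x Ax].
  by rewrite tnth_mktuple; exact: (gfP i).1.
have kn := step_index_lt x n0.
rewrite hnE -[step_index n x]/(nat_of_ord (Ordinal kn)) nth_mktuple.
exact: (gfP _).2.
Qed.

Section TopologicalGroup.
Variables (G : topologicalType) (mul : G -> G -> G) (inv : G -> G) (one : G).
Hypothesis HG : topological_group mul inv one.

Lemma mulgKV x y : mul (mul x (inv y)) y = x.
Proof. by case: HG => mulA mul1 mulV _ _; rewrite -mulA (mulV y).1 (mul1 x).2. Qed.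

Lemma continuous_mulV : continuous (fun p : G * G => mul p.1 (inv p.2)).
Proof.
case: HG => _ _ _ cmul cinv p.
have cpair : (fun q : G * G => (q.1, inv q.2)) @ p --> (p.1, inv p.2).
  by apply: cvg_pair; [exact: cvg_fst | exact: (cvg_comp snd inv cvg_snd (cinv _))].
exact: (cvg_comp _ _ cpair (cmul _)).
Qed.

Lemma strongly_measurable_mulV (R : realType) (f h : R -> G) :
  strongly_measurable f -> strongly_measurable h ->
  strongly_measurable (fun x => mul (f x) (inv (h x))).
Proof.
move=> sf sh.
exact: strongly_measurable_comp continuous_mulV (strongly_measurable_pair sf sh).
Qed.

Lemma right_translate_net (R : realType) (A : set R) (f : R -> G) (V : set G) :
    compact A -> {within A, continuous f} -> open V -> V one ->
  exists E : set G, exists2 d : R, finite_set E /\ 0 < d &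
    forall y, A y -> exists2 e, E e &
      forall x, A x -> `|x - y| < d -> V (mul (f x) (inv e)).
Proof.
move=> cA fA oV V1.
have pick x : exists r : R, 0 < r /\
    (A x -> forall y, A y -> `|x - y| < r -> V (mul (f y) (inv (f x)))).
  have [Ax|nAx] := pselect (A x); last by exists 1; split => // /nAx.
  have fx : f @ within A (nbhs x) --> f x.
    by move/subspace_continuousP: fA; apply.
  have : (fun y => mul (f y) (inv (f x))) @ within A (nbhs x) --> one.
    case: HG => _ _ mulV _ _; rewrite -(mulV (f x)).2.
    exact: cvg_comp _ _ (cvg_pair fx (cvg_cst (f x))) (@continuous_mulV (f x, f x)).
  move=> /(_ V (open_nbhs_nbhs (conj oV V1))) /nbhs_ballP [r r0 hr].
  by exists r; split => // _ y Ay xy; exact: hr.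
have [r rP] := choice pick.
(* Halving the radii leaves room for the Lebesgue number d of the cover. *)
have [D DA cover] : finite_subset_cover A (fun x => ball x (r x / 2)) A.
  move: cA; rewrite compact_cover; apply.
    by move=> x _; exact: ball_open.
  move=> y Ay; exists y => //; apply: ballxx.
  by rewrite divr_gt0 // (rP y).1.
have [d [d0 dD]] : exists d : R, 0 < d /\ forall j : R, j \in D -> d <= r j / 2.
  apply: (filter_ex (F := (0 : R)^'+)); apply: filterI; first exact: nbhs_right_gt.
  apply: filterS (@filter_bigI _ _ D (fun j => [set d | d <= r j / 2]) _ _ _).
    by move=> d dD j jD; exact: dD j jD.
  by move=> j _; apply: nbhs_right_le; rewrite divr_gt0 // (rP j).1.
exists (f @` [set` D]), d; first by split => //; exact/finite_image/finite_fset.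
move=> y Ay; have [j jD yj] := cover y Ay.
exists (f j); first by exists j.
move=> x Ax xy; apply: (rP j).2 => //; first exact/set_mem/DA.
have := dD j jD; move: yj xy; rewrite /ball /= => yj xy.
by rewrite distrC in xy; have := ler_distD y j x; lra.
Qed.

End TopologicalGroup.

Theorem lemma4p1 (R : realType) (G : topologicalType)
    (mul : G -> G -> G) (inv : G -> G) (one : G)
    (HG : topological_group mul inv one)
    (f : R -> G) (Hf : strongly_measurable f)
    (U : set (R -> G)) (HU : L0_nbhs1 one U) :
  exists (E : set G) (m : nat), finite_set E /\
    forall n : nat, (m <= n)%N -> (0 < n)%N ->
      exists (u : R -> G) (g : n.-tuple G),
        [/\ U u, (forall i : 'I_n, E (tnth g i))
          & ae_eq01 f (fun x => mul (u x) (hn one g x))].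
Proof.
have [_ [V [eps [oV V1 eps0 NU]]]] := HU.
have [A [cA A01 mA fA]] := Hf _ (divr_gt0 eps0 (ltr0n R 2)).
have cpA : compact A := subclosed_compact cA (@segment_compact R 0 1) A01.
have [E [d [finE d0] net]] := right_translate_net HG cpA fA oV V1.
exists (E `|` [set one]), (Num.truncn d^-1).+1; split.
  by rewrite finite_setU; split; [exact: finE | exact: finite_set1].
move=> n dn n0; have nd : n%:R^-1 < d.
  rewrite -[d]invrK ltf_pV2 ?posrE ?invr_gt0 ?ltr0n //.
  by apply: lt_le_trans (truncnS_gt _) _; rewrite ler_nat.
have [g [gE gV]] := exists_step_tuple
  (P := fun x e => V (mul (f x) (inv e))) one n0 nd A01 net.
pose u x := mul (f x) (inv (hn one g x)).
exists u, g; split => //.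
- apply: NU; split.
    by apply: (strongly_measurable_mulV HG Hf); exact: strongly_measurable_hn.
  have bad_in_gap : `[0%R, 1%R] `&` [set x | ~ V (u x)] `<=` `[0%R, 1%R] `\` A.
    by move=> x [x01 nVx]; split => // Ax; apply/nVx/gV.
  apply: le_lt_trans (le_lt_trans mA _); first exact: le_mu_ext.
  by rewrite lte_fin ltr_pdivrMr // ltr_pMr // ltr1n.
- suff -> : (fun x => mul (u x) (hn one g x)) = f by exact: ae_eq01_refl.
  by apply/funext => x; rewrite /u (mulgKV HG).
Qed.
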